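(* For $m=3$ objects, the game for SumLoss with top-1 feedback and binary relevance (loss matrix $L$ and feedback matrix $H$ as in the context) does not satisfy the local observability condition: there exists a pair of neighboring actions $i,j$ such that $\ell_i-\ell_j\notin\bigoplus_{k\in N^+_{i,j}}\mathrm{Col}(S_k^\top)$.
   Context: Objects are $\{1,\dots,m\}$. Learner actions are permutations $\sigma_1,\dots,\sigma_{m!}$ of $[m]$ ($\sigma(i)$ = rank of object $i$, $\sigma^{-1}(j)$ = object at rank $j$); adversary actions are $r_1,\dots,r_{2^m}$ enumerating $\{0,1\}^m$. Loss matrix: $L_{i,j}=\sum_{k=1}^m\sigma_i(k)r_j(k)$, rows $\ell_i$. Feedback matrix: $H_{i,j}=r_j(\sigma_i^{-1}(1))$. Signal matrix $S_i\in\{0,1\}^{2\times2^m}$: $(S_i)_{1,\ell}=\mathbb{1}(H_{i,\ell}=0)$, $(S_i)_{2,\ell}=\mathbb{1}(H_{i,\ell}=1)$. With $\Delta$ the probability simplex in $\mathbb{R}^{2^m}$, $C_i=\{p\in\Delta:\ell_i\cdot p\le\ell_k\cdot p\ \forall k\}$; action $i$ is Pareto-optimal if $C_i$ is non-empty and $(2^m-1)$-dimensional; Pareto-optimal $i,j$ are neighboring if $C_i\cap C_j$ is a $(2^m-2)$-dimensional polytope, and then $N^+_{i,j}=\{k\in[m!]:C_i\cap C_j\subseteq C_k\}$. A neighboring pair $i,j$ is locally observable if $\ell_i-\ell_j\in\bigoplus_{k\in N^+_{i,j}}\mathrm{Col}(S_k^\top)$; local observability holds if every neighboring pair is locally observable.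 *)

From HB Require Import structures.
From mathcomp Require Import all_boot all_order all_fingroup all_algebra.
From mathcomp Require Import reals.
Set Implicit Arguments. Unset Strict Implicit. Unset Printing Implicit Defensive.
Import Order.TTheory GRing.Theory Num.Theory.
Local Open Scope ring_scope.

Definition aff_indep (R : fieldType) (d e : nat) (P : 'I_e.+1 -> 'rV[R]_d) :=
  row_free (\matrix_(i < e) (P (lift ord0 i) - P ord0)).

(* S is nonempty and its affine hull has dimension e: S contains e+1
   affinely independent points but not e+2 affinely independent points. *)
Definition has_dim (R : fieldType) (d : nat) (S : 'rV[R]_d -> Prop) (e : nat) :=
  (exists P : 'I_e.+1 -> 'rV[R]_d, (forall i, S (P i)) /\ aff_indep P) /\
  ~ (exists P : 'I_e.+2 -> 'rV[R]_d, (forall i, S (P i)) /\ aff_indep P).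

Definition dotv (R : pzRingType) (d : nat) (u v : 'rV[R]_d) : R :=
  \sum_(j < d) u 0 j * v 0 j.

Definition simplex (R : realFieldType) (d : nat) (p : 'rV[R]_d) : Prop :=
  (forall j, 0 <= p 0 j) /\ \sum_(j < d) p 0 j = 1.

(* m = n.+1 objects, 0-indexed as 'I_m; learner actions are the
   permutations s : 'S_m (the learner's action set, indexed directly by the
   permutations instead of by 1..m!); the rank of object k is (s k).+1,
   and s^-1 ord0 is the object placed at rank 1. *)

Section Game.
Variables (R : realType) (n : nat).
Local Notation m := n.+1.

Definition nadv := (2 ^ m)%N.

(* Adversary action r_j, j : 'I_(2^m) (0-indexed): the binary expansion
   of j, an enumeration of {0,1}^m. *)
Definition radv (j : 'I_nadv) (k : 'I_m) : bool := odd (j %/ 2 ^ k).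

Definition lrow (s : 'S_m) : 'rV[R]_nadv :=
  \row_(j < nadv) \sum_(k < m) ((s k).+1)%:R * (radv j k)%:R.

Definition feedback (s : 'S_m) (j : 'I_nadv) : bool := radv j (s^-1 ord0)%g.

Definition signal (s : 'S_m) : 'M[R]_(2, nadv) :=
  \matrix_(a < 2, j < nadv)
    (if a == 0 :> nat then (~~ feedback s j)%:R else (feedback s j)%:R).

Definition cell (s : 'S_m) (p : 'rV[R]_nadv) : Prop :=
  simplex p /\ forall t : 'S_m, dotv (lrow s) p <= dotv (lrow t) p.

Definition pareto (s : 'S_m) : Prop := has_dim (cell s) nadv.-1.

(* C_s \cap C_t is a (2^m - 2)-dimensional polytope (it is automatically a
   polytope, being a bounded intersection of half-spaces). *)
Definition neighbors (s t : 'S_m) : Prop :=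
  pareto s /\ pareto t /\
  has_dim (fun p => cell s p /\ cell t p) nadv.-2.

Definition in_Nplus (s t k : 'S_m) : Prop :=
  forall p, cell s p /\ cell t p -> cell k p.

(* l_s - l_t lies in the sum over k in N^+_{s,t} of Col(S_k^T), i.e. of the
   row spaces of the S_k.  N is the (unique) set N^+_{s,t}. *)
Definition locally_observable_pair (s t : 'S_m) : Prop :=
  forall N : {set 'S_m}, (forall k, k \in N <-> in_Nplus s t k) ->
    (lrow s - lrow t <= \sum_(k in N) <<signal k>>)%MS.

Definition local_observability : Prop :=
  forall s t, neighbors s t -> locally_observable_pair s t.

End Game.

(* Take the identity ranking and the ranking swapping objects 1 and 2. In terms
   of the relevance marginals q_k = P(r(k) = 1) their cells are the regions
   q_0 >= q_1 >= q_2 and q_0 >= q_2 >= q_1 of the simplex; both are full-dimensional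
   and they meet in the codimension-one face q_1 = q_2 <= q_0, whose relative
   interior (q_0 > q_1) lies in no other cell, so N^+ consists of the two actions
   alone. Both place object 0 on top, so their signals depend on r(0) only and
   are annihilated by e_2 - e_4 (the outcomes in which only object 1, resp.
   only object 2, is relevant), whereas the loss difference r(2) - r(1) is not. The dimension claims are certified by explicit affinely independent
   points and, from above, by the rank of the linear constraints. *)

From HB Require Import structures.
From mathcomp Require Import all_boot all_order all_fingroup all_algebra.
From mathcomp Require Import reals.
From mathcomp Require Import ring lra.
Set Implicit Arguments. Unset Strict Implicit. Unset Printing Implicit Defensive.
Import Order.TTheory GRing.Theory Num.Theory.
Local Open Scope ring_scope.

Section AffineDimension.
Variable F : fieldType.

Definition unitv (d a : nat) : 'rV[F]_d := \row_j ((j : nat) == a)%:R.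

Lemma row_free_of_scaled_unit_columns e d (A : 'M[F]_(e, d)) (c : 'I_e -> 'I_d) (a : F) :
  a != 0 -> (forall i k, A i (c k) = (i == k)%:R * a) -> row_free A.
Proof.
move=> a0 HA; apply/row_freeP; exists (\matrix_(j, k) ((j == c k)%:R / a)).
apply/matrixP => i k; rewrite [LHS]mxE (bigD1 (c k)) // big1 => [|j /negbTE nj].
  by rewrite !mxE eqxx HA mulr1n mul1r mulfK //= addr0.
by rewrite mxE nj mul0r mulr0.
Qed.

Lemma aff_indep_of_scaled_unit_columns d e (P : 'I_e.+1 -> 'rV[F]_d)
    (c : 'I_e -> 'I_d) (a : F) :
  a != 0 -> (forall i k, (P (lift ord0 i) - P ord0) 0 (c k) = (i == k)%:R * a) ->
  aff_indep P.
Proof.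
move=> a0 HP; apply: (row_free_of_scaled_unit_columns (c := c) a0) => i k.
by rewrite mxE HP.
Qed.

Lemma aff_indep_vertex_perturbations d (b : 'rV[F]_d.+1) (c : F) :
  c != 0 -> aff_indep (fun i : 'I_d.+1 => b + c *: (unitv d.+1 i - unitv d.+1 0)).
Proof.
move=> c0; apply: (aff_indep_of_scaled_unit_columns (c := lift ord0) c0) => i k.
rewrite !mxE !lift0 /= eqSS -[(k == i :> nat)]/(k == i) eq_sym.
by case: (i == k); rewrite /=; ring.
Qed.

(* The differences P_i - P_0 of such a family form a free family in the kernel of W. *)
Lemma no_aff_indep_of_kernel d (S : 'rV[F]_d -> Prop) e p (W : 'M[F]_(d, p)) :
  (forall x y, S x -> S y -> (x - y) *m W = 0) -> (d - \rank W <= e)%N ->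
  ~ (exists P : 'I_e.+2 -> 'rV[F]_d, (forall i, S (P i)) /\ aff_indep P).
Proof.
move=> SW le_e [P [SP /eqP rkP]].
have : (\matrix_(i < e.+1) (P (lift ord0 i) - P ord0) <= kermx W)%MS.
  apply/sub_kermxP/row_matrixP => i; rewrite row_mul rowK row0; exact: SW.
move/mxrankS; rewrite mxrank_ker rkP => lt_e.
by have := leq_trans lt_e le_e; rewrite ltnn.
Qed.

End AffineDimension.

Section Simplex.
Variable R : realFieldType.

Lemma simplex_sub_mul_const1 d (x y : 'rV[R]_d) :
  simplex x -> simplex y -> (x - y) *m (const_mx 1 : 'M[R]_(d, 1)) = 0.
Proof.
move=> [_ sx] [_ sy]; apply/matrixP => i k; rewrite [i]ord1 !mxE.
under eq_bigr do rewrite !mxE mulr1.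
by rewrite sumrB sx sy subrr.
Qed.

Lemma rank_const1 d : \rank (const_mx 1 : 'M[R]_(d.+1, 1)) = 1%N.
Proof.
apply/eqP; rewrite eqn_leq rank_leq_col lt0n mxrank_eq0.
by apply/eqP => /matrixP/(_ ord0 ord0)/eqP; rewrite !mxE oner_eq0.
Qed.

Lemma has_full_dim_of_vertex_perturbations d (S : 'rV[R]_d.+1 -> Prop) b (c : R) :
  c != 0 -> (forall p, S p -> simplex p) ->
  (forall i : 'I_d.+1, S (b + c *: (unitv R d.+1 i - unitv R d.+1 0))) ->
  has_dim S d.
Proof.
move=> c0 Ssimplex Sb; split.
  by exists (fun i => b + c *: (unitv R d.+1 i - unitv R d.+1 0));
    split; [|exact: aff_indep_vertex_perturbations].
apply: (no_aff_indep_of_kernel (W := const_mx 1 : 'M[R]_(d.+1, 1))).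
  by move=> x y /Ssimplex sx /Ssimplex sy; exact: simplex_sub_mul_const1.
by rewrite rank_const1 subn1.
Qed.

Lemma sum_indicator_eq d a : (a < d)%N -> \sum_(j < d) ((j : nat) == a)%:R = 1 :> R.
Proof.
move=> lt_ad; rewrite (bigD1 (Ordinal lt_ad)) //= big1 => [|j /negbTE nj].
  by rewrite eqxx addr0.
by rewrite -[(j == a :> nat)]/(j == Ordinal lt_ad) nj.
Qed.

Lemma simplex_vertex_perturbation d (b : 'rV[R]_d.+1) (c : R) (i : 'I_d.+1) :
  simplex b -> 0 <= c <= b 0 0 -> simplex (b + c *: (unitv R d.+1 i - unitv R d.+1 0)).
Proof.
move=> [b_ge0 sum_b] /andP[c_ge0 c_le_b0]; split=> [j|].
  have bool_ge0 (t : bool) : 0 <= t%:R :> R by case: t; rewrite ?ler01 ?lexx.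
  rewrite !mxE; have := bool_ge0 (j == i :> nat).
  case: (unliftP 0 j) => [j' ->|->] /=; rewrite ?lift0 /=.
    by have := b_ge0 (lift 0 j'); nra.
  by case: (_ == _); rewrite /=; nra.
under eq_bigr do rewrite !mxE.
rewrite big_split /= -mulr_sumr sumrB sum_b !sum_indicator_eq //; lra.
Qed.

End Simplex.

Section Marginals.
Variables (R : realType) (n : nat).
Local Notation m := n.+1.
Local Notation D := (nadv n).

Lemma dotvDr d (u v w : 'rV[R]_d) : dotv u (v + w) = dotv u v + dotv u w.
Proof. by rewrite /dotv -big_split; apply: eq_bigr => j _; rewrite mxE mulrDr. Qed.

Lemma dotvC d (u v : 'rV[R]_d) : dotv u v = dotv v u.
Proof. by apply: eq_bigr => j _; rewrite mulrC. Qed.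

Lemma dotvZr d (c : R) (u v : 'rV[R]_d) : dotv u (c *: v) = c * dotv u v.
Proof. by rewrite /dotv mulr_sumr; apply: eq_bigr => j _; rewrite mxE mulrCA. Qed.

Lemma dotvNr d (u v : 'rV[R]_d) : dotv u (- v) = - dotv u v.
Proof. by rewrite -scaleN1r dotvZr mulN1r. Qed.

Lemma dotvBr d (u v w : 'rV[R]_d) : dotv u (v - w) = dotv u v - dotv u w.
Proof. by rewrite dotvDr dotvNr. Qed.

Lemma dotv_unitv d (u : 'rV[R]_d) a (lt_ad : (a < d)%N) :
  dotv u (unitv R d a) = u 0 (Ordinal lt_ad).
Proof.
rewrite /dotv (bigD1 (Ordinal lt_ad)) //= big1 => [|j /negbTE nj].
  by rewrite mxE eqxx mulr1 addr0.
by rewrite mxE -[(j == a :> nat)]/(j == Ordinal lt_ad) nj mulr0.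
Qed.

Lemma sum_entries_dotv d (p : 'rV[R]_d) : \sum_(j < d) p 0 j = dotv (const_mx 1) p.
Proof. by apply: eq_bigr => j _; rewrite mxE mul1r. Qed.

Lemma dotv_const1_unitv d a : (a < d)%N -> dotv (const_mx 1) (unitv R d a) = 1.
Proof. by move=> lt_ad; rewrite (dotv_unitv _ lt_ad) mxE. Qed.

Definition relevance (k : 'I_m) : 'rV[R]_D := \row_j (radv j k)%:R.

Definition marginal (p : 'rV[R]_D) (k : 'I_m) : R := dotv (relevance k) p.

Lemma dotv_lrow (s : 'S_m) (p : 'rV[R]_D) :
  dotv (lrow R s) p = \sum_(k < m) (s k).+1%:R * marginal p k.
Proof.
rewrite /marginal /dotv; under [RHS]eq_bigr do rewrite mulr_sumr.
rewrite exchange_big; apply: eq_bigr => j _; rewrite mxE mulr_suml.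
by apply: eq_bigr => k _; rewrite mxE; ring.
Qed.

Lemma marginal_unitv a k : (a < D)%N -> marginal (unitv R D a) k = (odd (a %/ 2 ^ k))%:R.
Proof. by move=> lt_aD; rewrite /marginal (dotv_unitv _ lt_aD) mxE. Qed.

Lemma marginal_vertex_perturbation (b : 'rV[R]_D) (c : R) (i : 'I_D) k :
  marginal (b + c *: (unitv R D i - unitv R D 0)) k = marginal b k + c * (radv i k)%:R.
Proof.
rewrite /marginal dotvDr dotvZr dotvBr -!/(marginal _ k) !marginal_unitv ?expn_gt0 //.
by rewrite div0n subr0.
Qed.

Lemma mul_delta_diff p (A : 'M[R]_(p, D)) (a b : 'I_D) :
  A *m (delta_mx a (0 : 'I_1) - delta_mx b 0) = col a A - col b A.
Proof. by rewrite mulmxBr -!colE. Qed.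

Lemma signal_mul_delta_diff (s : 'S_m) (a b : 'I_D) :
  feedback s a = feedback s b -> signal R s *m (delta_mx a (0 : 'I_1) - delta_mx b 0) = 0.
Proof.
move=> fab; rewrite mul_delta_diff; apply/matrixP => i j.
by rewrite !mxE fab subrr.
Qed.

End Marginals.

Section ThreeObjects.
Variable R : realType.
Local Notation D := (nadv 2).
Local Notation q := (@marginal R 2).

Definition i0 : 'I_3 := @Ordinal 3 0 isT.
Definition i1 : 'I_3 := @Ordinal 3 1 isT.
Definition i2 : 'I_3 := @Ordinal 3 2 isT.

Definition swap12 : 'S_3 := tperm i1 i2.

Lemma perm3_cases (u : 'S_3) :
  [/\ u i0 = 0 :> nat, u i1 = 1 :> nat & u i2 = 2 :> nat] \/
  [/\ u i0 = 0 :> nat, u i1 = 2 :> nat & u i2 = 1 :> nat] \/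
  [/\ u i0 = 1 :> nat, u i1 = 0 :> nat & u i2 = 2 :> nat] \/
  [/\ u i0 = 1 :> nat, u i1 = 2 :> nat & u i2 = 0 :> nat] \/
  [/\ u i0 = 2 :> nat, u i1 = 0 :> nat & u i2 = 1 :> nat] \/
  [/\ u i0 = 2 :> nat, u i1 = 1 :> nat & u i2 = 0 :> nat].
Proof.
have neq x y : x != y -> u x != u y :> nat.
  by rewrite (inj_eq val_inj) (inj_eq (@perm_inj _ u)).
move: (neq i0 i1 isT) (neq i0 i2 isT) (neq i1 i2 isT).
move: (ltn_ord (u i0)) (ltn_ord (u i1)) (ltn_ord (u i2)).
case: (u i0 : nat) (u i1 : nat) (u i2 : nat) => [|[|[|?]]] [|[|[|?]]] [|[|[|?]]] //= *.
all: by do ?[by left | right].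
Qed.

Lemma swap12_vals : [/\ swap12 i0 = i0, swap12 i1 = i2 & swap12 i2 = i1].
Proof. by rewrite /swap12 tpermL tpermR tpermD. Qed.

Lemma loss3 (u : 'S_3) p :
  dotv (lrow R u) p = (u i0).+1%:R * q p i0 + (u i1).+1%:R * q p i1 + (u i2).+1%:R * q p i2.
Proof.
rewrite dotv_lrow !big_ord_recl big_ord0 addr0 addrA.
by congr (_ + _ + _); congr ((u _).+1%:R * q p _); apply: val_inj.
Qed.

Lemma loss_id p : dotv (lrow R 1) p = q p i0 + 2%:R * q p i1 + 3%:R * q p i2.
Proof. by rewrite loss3 !perm1 mul1r. Qed.

Lemma loss_swap12 p : dotv (lrow R swap12) p = q p i0 + 3%:R * q p i1 + 2%:R * q p i2.
Proof. by case: swap12_vals => s0 s1 s2; rewrite loss3 s0 s1 s2 mul1r. Qed.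

Lemma loss_id_le (u : 'S_3) p :
  q p i1 <= q p i0 -> q p i2 <= q p i1 -> dotv (lrow R 1) p <= dotv (lrow R u) p.
Proof.
move=> le10 le21; rewrite loss_id loss3.
by have [|[|[|[|[|]]]]] := perm3_cases u; case=> -> -> ->; lra.
Qed.

Lemma loss_swap12_le (u : 'S_3) p :
  q p i2 <= q p i0 -> q p i1 <= q p i2 -> dotv (lrow R swap12) p <= dotv (lrow R u) p.
Proof.
move=> le20 le12; rewrite loss_swap12 loss3.
by have [|[|[|[|[|]]]]] := perm3_cases u; case=> -> -> ->; lra.
Qed.

Lemma top_fixed_of_loss_le (u : 'S_3) p :
  q p i1 < q p i0 -> q p i2 = q p i1 -> dotv (lrow R u) p <= dotv (lrow R 1) p -> u i0 = i0.
Proof.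
move=> lt10 e21; rewrite loss_id loss3 e21 => le_loss; apply: ord_inj; move: le_loss.
by have [|[|[|[|[|]]]]] := perm3_cases u; case=> -> -> -> //= le_loss; exfalso; lra.
Qed.

Lemma perm3_eq (v w : 'S_3) :
  v i0 = w i0 :> nat -> v i1 = w i1 :> nat -> v i2 = w i2 :> nat -> v = w.
Proof.
move=> e0 e1 e2; apply/permP => -[[|[|[|//]]] x3]; apply: ord_inj.
- by rewrite (_ : Ordinal x3 = i0) //; apply: ord_inj.
- by rewrite (_ : Ordinal x3 = i1) //; apply: ord_inj.
- by rewrite (_ : Ordinal x3 = i2) //; apply: ord_inj.
Qed.

Lemma perm3_fixing_i0 (u : 'S_3) : u i0 = i0 -> u = 1%g \/ u = swap12.
Proof.
move=> /(congr1 val) /= u0; case: swap12_vals => s0 s1 s2.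
have [|[|[|[|[|]]]]] := perm3_cases u; case; rewrite u0 // => _ e1 e2.
  by left; apply: perm3_eq; rewrite ?perm1.
by right; apply: perm3_eq; rewrite ?s0 ?s1 ?s2.
Qed.

Lemma cell_id p : simplex p -> q p i1 <= q p i0 -> q p i2 <= q p i1 -> cell 1 p.
Proof. by move=> sp le10 le21; split=> // u; apply: loss_id_le. Qed.

Lemma cell_swap12 p : simplex p -> q p i2 <= q p i0 -> q p i1 <= q p i2 -> cell swap12 p.
Proof. by move=> sp le20 le12; split=> // u; apply: loss_swap12_le. Qed.

Local Notation e a := (unitv R D a).

Definition base_id : 'rV[R]_D := (1/2) *: e 0 + (1/4) *: e 1 + (1/4) *: e 3.
Definition base_swap12 : 'rV[R]_D := (1/2) *: e 0 + (1/4) *: e 1 + (1/4) *: e 5.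

Ltac mass_marginals :=
  rewrite ?sum_entries_dotv /marginal ?(dotvDr, dotvBr, dotvZr, dotvNr) -?/(marginal _ _)
    ?dotv_const1_unitv ?marginal_unitv //=.

Lemma pareto_of_base (s : 'S_3) (b : 'rV[R]_D) :
  simplex b -> 1/8 <= b 0 0 ->
  (forall p, simplex p -> (forall k, q b k <= q p k <= q b k + 1/8) -> cell s p) ->
  pareto R s.
Proof.
move=> sb b0 Hcell.
apply: (has_full_dim_of_vertex_perturbations (d := 7) (b := b) (c := 1/8)) => [|p []//|i].
  by rewrite div1r invr_eq0 pnatr_eq0.
apply: Hcell => [|k]; first by apply: simplex_vertex_perturbation => //; lra.
have r01 : 0 <= ((radv (i : 'I_D) k)%:R : R) <= 1 by case: radv; rewrite /= ?ler01 ?lexx.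
rewrite marginal_vertex_perturbation; lra.
Qed.

Lemma simplex_base_id : simplex base_id.
Proof.
split; last by mass_marginals; lra.
by case=> [[|[|[|[|[|[|[|[|//]]]]]]]] ?]; rewrite !mxE /=; lra.
Qed.

Lemma simplex_base_swap12 : simplex base_swap12.
Proof.
split; last by mass_marginals; lra.
by case=> [[|[|[|[|[|[|[|[|//]]]]]]]] ?]; rewrite !mxE /=; lra.
Qed.

Lemma pareto_id : pareto R (1 : 'S_3).
Proof.
apply: (pareto_of_base simplex_base_id); first by rewrite !mxE /=; lra.
move=> p sp qp; apply: cell_id => //; move: (qp i0) (qp i1) (qp i2); mass_marginals; lra.
Qed.

Lemma pareto_swap12 : pareto R swap12.
Proof.
apply: (pareto_of_base simplex_base_swap12); first by rewrite !mxE /=; lra.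
move=> p sp qp; apply: cell_swap12 => //; move: (qp i0) (qp i1) (qp i2); mass_marginals; lra.
Qed.

Definition base_face : 'rV[R]_D := (1/2) *: e 0 + (1/4) *: e 1 + (1/8) *: e 3 + (1/8) *: e 5.

(* Directions that preserve the total mass and the equality q_1 = q_2. *)
Definition face_dir (i : nat) : 'rV[R]_D :=
  match i with
  | 1 => e 1 - e 0
  | 2 => e 6 - e 0
  | 3 => e 7 - e 0
  | 4 => e 2 + e 5 - 2%:R *: e 0
  | 5 => e 3 + e 5 - 2%:R *: e 0
  | 6 => e 4 - e 5
  | _ => 0
  end.

Definition face_point (i : 'I_7) : 'rV[R]_D := base_face + (1/16) *: face_dir i.

Lemma marginals_face_point0 :
  [/\ q (face_point 0) i0 = 1/2, q (face_point 0) i1 = 1/8 & q (face_point 0) i2 = 1/8].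
Proof. by rewrite /face_point /= scaler0 addr0 /base_face; mass_marginals; split; lra. Qed.

Lemma simplex_face_point i : simplex (face_point i).
Proof.
split.
  move=> j; case: i => [[|[|[|[|[|[|[|//]]]]]]] ?];
  case: j => [[|[|[|[|[|[|[|[|//]]]]]]]] ?]; rewrite !mxE /=; lra.
rewrite /face_point /base_face; case: i => [[|[|[|[|[|[|[|//]]]]]]] ?] /=;
rewrite ?scaler0 ?addr0; mass_marginals; lra.
Qed.

Lemma marginals_face_point i :
  q (face_point i) i1 <= q (face_point i) i0 /\ q (face_point i) i2 = q (face_point i) i1.
Proof.
rewrite /face_point /base_face; case: i => [[|[|[|[|[|[|[|//]]]]]]] ?] /=;
rewrite ?scaler0 ?addr0; mass_marginals; split; lra.
Qed.

Lemma face_point_cells i : cell 1 (face_point i) /\ cell swap12 (face_point i).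
Proof.
have sp := simplex_face_point i; have [le10 e21] := marginals_face_point i.
by split; [apply: cell_id | apply: cell_swap12]; rewrite ?e21.
Qed.

Lemma aff_indep_face_points : aff_indep face_point.
Proof.
apply: (aff_indep_of_scaled_unit_columns
  (c := fun k : 'I_6 => inord (nth 0 [:: 1; 6; 7; 2; 3; 4] k)) (a := 1/16)).
  by rewrite div1r invr_eq0 pnatr_eq0.
move=> i k; case: i => [[|[|[|[|[|[|//]]]]]] ?]; case: k => [[|[|[|[|[|[|//]]]]]] ?];
rewrite !mxE /= ?inordK //=; lra.
Qed.

Definition face_normal : 'rV[R]_D := lrow R 1 - lrow R swap12.

Local Notation o a := (@Ordinal D a isT).

Lemma face_normal_at_2_4 : face_normal 0 (o 2) = -1 /\ face_normal 0 (o 4) = 1.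
Proof.
have lrow_at u a (lt_a8 : (a < D)%N) : lrow R u 0 (Ordinal lt_a8) = dotv (lrow R u) (e a).
  by rewrite (dotv_unitv _ lt_a8).
by split; rewrite [LHS]mxE [X in _ + X]mxE !lrow_at loss_id loss_swap12; mass_marginals; lra.
Qed.

(* Its columns 1 + w and 1 - w span the same plane as the total mass and the
   normal w, and each vanishes at one of the coordinates 2 and 4. *)
Definition face_kernel : 'M[R]_(D, 2) := \matrix_(j, k) (1 + (-1) ^+ k * face_normal 0 j).

Lemma rank_face_kernel : \rank face_kernel = 2%N.
Proof.
rewrite -mxrank_tr; apply/eqP.
apply: (row_free_of_scaled_unit_columns
  (c := fun k : 'I_2 => if k == 0 then o 4 else o 2) (a := 2)); first by rewrite pnatr_eq0.
have [w2 w4] := face_normal_at_2_4.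
move=> [[|[|//]] ?] [[|[|//]] ?].
all: by rewrite [_^T _ _]mxE [face_kernel _ _]mxE /= ?w2 ?w4 ?expr0 ?expr1; lra.
Qed.

Lemma face_sub_mul_kernel x y :
  cell 1 x /\ cell swap12 x -> cell 1 y /\ cell swap12 y -> (x - y) *m face_kernel = 0.
Proof.
have on_face p : cell 1 p /\ cell swap12 p -> dotv face_normal p = 0.
  move=> [[_ le1] [_ le2]]; rewrite dotvC dotvBr !(dotvC p).
  by apply/eqP; rewrite subr_eq0 eq_le le1 le2.
move=> fx fy; apply/matrixP => i k; rewrite [i]ord1 [LHS]mxE [RHS]mxE.
transitivity (dotv (x - y) (const_mx 1 : 'rV[R]_D) + (-1) ^+ k * dotv (x - y) face_normal).
  rewrite /dotv mulr_sumr -big_split; apply: eq_bigr => j _.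
  by rewrite [face_kernel _ _]mxE [const_mx _ _ _]mxE mulrDr mulr1 mulrCA.
rewrite !(dotvC (x - y)) !dotvBr on_face // on_face // -!sum_entries_dotv.
by rewrite (proj2 fx.1.1) (proj2 fy.1.1) !subrr mulr0 addr0.
Qed.

Lemma neighbors_id_swap12 : neighbors R 1 swap12.
Proof.
split; [exact: pareto_id | split; first exact: pareto_swap12].
split; first by exists face_point; split; [exact: face_point_cells | exact: aff_indep_face_points].
have rank_le : (D - \rank face_kernel <= D.-2)%N by rewrite rank_face_kernel.
exact: (no_aff_indep_of_kernel face_sub_mul_kernel rank_le).
Qed.

Lemma in_Nplus_id_swap12 (k : 'S_3) : k \in [set 1%g; swap12] <-> in_Nplus R 1 swap12 k.
Proof.
split=> [|Nk]; first by rewrite !inE => /orP[] /eqP -> p [].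
have [_ le_k] := Nk _ (face_point_cells 0).
have [q0 q1 q2] := marginals_face_point0.
(* There q_0 > q_1 = q_2, so an optimal action ranks object 0 first. *)
have k0 : k i0 = i0.
  by apply: (top_fixed_of_loss_le (p := face_point 0)) (le_k 1%g); rewrite ?q0 ?q1 ?q2 //; lra.
by rewrite !inE; case: (perm3_fixing_i0 k0) => ->; rewrite eqxx ?orbT.
Qed.

Lemma not_locally_observable_id_swap12 : ~ locally_observable_pair R 1 swap12.
Proof.
pose v : 'cV[R]_D := delta_mx (o 2) 0 - delta_mx (o 4) 0.
(* Both actions rank object 0 first, and r(0) = 0 for the adversary actions 2 and 4. *)
have signal_v (k : 'S_3) : k \in [set 1%g; swap12] -> signal R k *m v = 0.
  rewrite !inE => /orP[] /eqP ->; apply: signal_mul_delta_diff; rewrite /feedback.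
    by rewrite invg1 perm1.
  by rewrite tpermV tpermD.
move=> /(_ _ in_Nplus_id_swap12) obs.
have : (lrow R 1 - lrow R swap12 <= kermx v)%MS.
  apply: (submx_trans obs); apply/sumsmx_subP => k Nk.
  by rewrite genmxE; apply/sub_kermxP; exact: signal_v.
rewrite -/face_normal => /sub_kermxP/matrixP/(_ 0 0).
have [w2 w4] := face_normal_at_2_4; move: face_normal w2 w4 => w w2 w4.
by rewrite mul_delta_diff !mxE w2 w4; lra.
Qed.

End ThreeObjects.

Unset Implicit Arguments.

Theorem theorem2 (R : realType) :
  exists s t : 'S_3,
    neighbors R s t /\ ~ locally_observable_pair R s t.
Proof.
exists 1%g, swap12.
by split; [exact: neighbors_id_swap12 | exact: not_locally_observable_id_swap12].
Qed.
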